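(* Let $k$ be a field, $\sigma$ an automorphism of $k$, and $\delta$ a $\sigma$-derivation of $k$. Then: (1) the skew series field $k((t,\sigma))$ is a regular extension of $k$; (2) the skew series field $k_{\sigma,\delta}((z))$ is a regular extension of $k$; (3) the skew rational fraction field $k(t,\sigma,\delta)$ is a regular extension of $k$.
   Context: Fields are not assumed commutative. An element $x$ of a field extension $h/k$ is algebraic over $k$ if the subfield $k(x)\subset h$ it generates has finite dimension both as a left and as a right $k$-vector space. A field extension $K/k$ is called regular if every element of $K$ algebraic over $k$ belongs to $k$. Consequently, if $k\subset L\subset K$ are fields and $K/k$ is regular, then $L/k$ is regular. The skew series field with right-hand coefficients $k_{\sigma,\delta}((z))$ consists of formal series $S=\sum_{i\ge n} z^i s_i$ ($n\in\mathbb{Z}$, $s_i\in k$), with left multiplication by $a\in k$ determined by $az=\sum_{i\ge 1} z^i\,\sigma\circ\delta^{i-1}(a)$. The skew series field $k((t,\sigma))$ consists of formal series $S=\sum_{i\ge n} s_i t^i$ ($n\in\mathbb{Z}$, $s_i\in k$) with $ta=\sigma(a)t$ for $a\in k$. $k(t,\sigma,\delta)$ denotes the skew field of fractions of the Ore polynomial ring $k[t,\sigma,\delta]$. There are $k$-embeddings $k(t,\sigma,\delta)\to k_{\sigma,\delta}((z))$, $t\mapsto z^{-1}$, and $k(t,\sigma)\to k((t,\sigma))$, $t\mapsto t$. *)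

(* Skew (noncommutative) fields are modelled as unitRingTypes
   in which every nonzero element is a unit. *)
From HB Require Import structures.
From mathcomp Require Import all_boot all_order all_algebra.
From Stdlib Require Import ClassicalEpsilon.
Set Implicit Arguments. Unset Strict Implicit. Unset Printing Implicit Defensive.
Import Order.TTheory GRing.Theory Num.Theory.
Local Open Scope ring_scope.

Section SkewSeries.
Variable k : unitRingType.

(* A (formal Laurent) series is given by its coefficient function int -> k;
   the series field is the set of functions with support bounded below. *)
Definition laurent (f : int -> k) : Prop :=
  exists n : int, forall i : int, i < n -> f i = 0.

(* some lower bound for the support (any valid bound gives the same products) *)
Definition lbound (f : int -> k) : int :=
  epsilon (inhabits (0 : int)) (fun n : int => forall i : int, i < n -> f i = 0).

Definition ls_const (a : k) : int -> k := fun i => if i == 0 then a else 0.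
Definition ls_zero : int -> k := fun _ => 0.
Definition ls_add (f g : int -> k) : int -> k := fun i => f i + g i.
Definition ls_opp (f : int -> k) : int -> k := fun i => - f i.

Definition sigz (s sinv : k -> k) (i : int) (a : k) : k :=
  if 0 <= i then iter (absz i) s a else iter (absz i) sinv a.

(* product in k((t,sigma)) : (sum s_i t^i)(sum r_j t^j) = sum s_i sigma^i(r_j) t^(i+j) *)
Definition tmul (s sinv : k -> k) (f g : int -> k) : int -> k := fun N =>
  let nf := lbound f in let ng := lbound g in let M := N - nf - ng in
  if 0 <= M then
    \sum_(d < (absz M).+1) f (nf + d%:Z) * sigz s sinv (nf + d%:Z) (g (N - nf - d%:Z))
  else 0.

(* Commutation coefficients in k_{sigma,delta}((z)):  a z^j = sum_m z^m c_{j,m}(a).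
   j >= 0 : from  a z = sum_(l>=1) z^l sigma(delta^(l-1) a)
   j < 0  : from  a z^-1 = z^-1 sigma^-1(a) - delta(sigma^-1 a). *)
Fixpoint cpos (s d : k -> k) (j : nat) (m : int) (a : k) : k :=
  match j with
  | 0 => if m == 0 then a else 0
  | j'.+1 => let L := m - j'%:Z in
     if 1 <= L then \sum_(l < absz L) s (iter l d (cpos s d j' (m - (l%:Z + 1)) a))
     else 0
  end.

Fixpoint cneg (s sinv d : k -> k) (n : nat) (m : int) (a : k) : k :=
  match n with
  | 0 => if m == 0 then a else 0
  | n'.+1 => sinv (cneg s sinv d n' (m + 1) a) - d (sinv (cneg s sinv d n' m a))
  end.

Definition czc (s sinv d : k -> k) (j m : int) (a : k) : k :=
  match j with
  | Posz n => cpos s d n m a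
  | Negz n => cneg s sinv d n.+1 m a
  end.

(* product in k_{sigma,delta}((z)) (right-hand coefficients):
   (sum z^i s_i)(sum z^j r_j) = sum_{i,j,m} z^(i+m) c_{j,m}(s_i) r_j *)
Definition zmul (s sinv d : k -> k) (f g : int -> k) : int -> k := fun N =>
  let nf := lbound f in let ng := lbound g in let M := N - nf - ng in
  if 0 <= M then
    \sum_(d1 < (absz M).+1) \sum_(d2 < (absz M - d1)%N.+1)
       czc s sinv d (ng + d2%:Z) (N - nf - d1%:Z) (f (nf + d1%:Z)) * g (ng + d2%:Z)
  else 0.

(* the element z^-1 (image of t) *)
Definition zinv : int -> k := fun i => if i == -1 then 1 else 0.

Section Generic.
Variable mul : (int -> k) -> (int -> k) -> (int -> k).

Definition divring_closed (S : (int -> k) -> Prop) : Prop :=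
  [/\ forall u v, S u -> S v -> S (ls_add u v),
      forall u, S u -> S (ls_opp u),
      forall u v, S u -> S v -> S (mul u v) &
      forall u w, S u -> laurent w -> mul u w = ls_const 1 -> mul w u = ls_const 1 -> S w].

Definition gen (G : (int -> k) -> Prop) (y : int -> k) : Prop :=
  forall S, divring_closed S -> (forall a, S (ls_const a)) -> (forall g, G g -> S g) -> S y.

Definition lsum (l : seq (int -> k)) : int -> k := foldr ls_add ls_zero l.

(* x algebraic over k: k(x) finite-dimensional as left and as right k-space *)
Definition algebraic_over_k (x : int -> k) : Prop :=
  let kx := gen (fun g => g = x) in
  (exists bs : seq (int -> k), (forall b, List.In b bs -> kx b) /\
     forall y, kx y -> exists cs : seq k, size cs = size bs /\
       y = lsum [seq mul (ls_const c.1) c.2 | c <- zip cs bs]) /\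
  (exists bs : seq (int -> k), (forall b, List.In b bs -> kx b) /\
     forall y, kx y -> exists cs : seq k, size cs = size bs /\
       y = lsum [seq mul c.2 (ls_const c.1) | c <- zip cs bs]).

Definition regular_over_k (C : (int -> k) -> Prop) : Prop :=
  forall x, C x -> algebraic_over_k x -> exists a : k, x = ls_const a.
End Generic.
End SkewSeries.

From Pilot Require Import Defs.
From HB Require Import structures.
From mathcomp Require Import all_boot all_order all_algebra zify.
From Stdlib Require Import ClassicalEpsilon Classical FunctionalExtensionality.
Set Implicit Arguments. Unset Strict Implicit. Unset Printing Implicit Defensive.
Import Order.TTheory GRing.Theory.
Local Open Scope ring_scope.

(* Write x = x_0 + y with y without constant term.  If y <> 0, its valuation m is
   nonzero, and since valuations add under the product (sigma is bijective and k
   has no zero divisors) the powers y^n, which lie in k(x), have the pairwise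
   distinct valuations n m.  By elimination, a k-span of r series contains nonzero
   elements of at most r distinct valuations, so k(x) cannot be finite-dimensional
   unless y = 0.  For k((t,sigma)) this uses the left dimension, for
   k_{sigma,delta}((z)) the right one, i.e. the left dimension over the opposite
   field k^c.  Part (3) follows from (2) since k(t,sigma,delta) is the subfield
   generated by z^-1. *)

Lemma sum_ord_only (V : nmodType) n (F : 'I_n.+1 -> V) (j : nat) :
  (j <= n)%N -> (forall i : 'I_n.+1, i != j :> nat -> F i = 0) ->
  \sum_(i < n.+1) F i = F (inord j).
Proof.
move=> hj hF; rewrite (bigD1 (inord j)) //= big1 ?addr0 // => i hi; apply: hF.
by apply: contraNneq hi => e; apply/eqP/val_inj; rewrite /= inordK.
Qed.

Section Valuation.
Variable k : unitRingType.

Definition has_valuation (u : int -> k) (p : int) : Prop :=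
  u p != 0 /\ forall i, i < p -> u i = 0.

Lemma lbound_vanish (u : int -> k) : laurent u -> forall i, i < lbound u -> u i = 0.
Proof. exact: epsilon_spec. Qed.

Lemma has_valuation_laurent (u : int -> k) p : has_valuation u p -> laurent u.
Proof. by case=> _ h; exists p. Qed.

Lemma lbound_le_valuation (u : int -> k) p : has_valuation u p -> lbound u <= p.
Proof.
move=> hv; rewrite leNgt; apply/negP => /(lbound_vanish (has_valuation_laurent hv)).
by case: hv => /eqP.
Qed.

Lemma laurent_has_valuation (u : int -> k) :
  laurent u -> (exists i, u i != 0) -> exists p, has_valuation u p.
Proof.
move=> [n hn] [i hi].
have ex : exists j : nat, u (n + j%:Z) != 0.
  have ni : n <= i by rewrite leNgt; apply: contra hi => /hn ->.
  by exists (absz (i - n)); rewrite (_ : n + _ = i) //; lia.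
case: (ex_minnP ex) => j uj jmin; exists (n + j%:Z); split=> // l hl.
have [/hn //|nl] := ltP l n.
apply/eqP/negPn/negP => ul.
have := jmin (absz (l - n)); rewrite (_ : n + _ = l); last lia.
by move=> /(_ ul); lia.
Qed.

Lemma ls_const0 i : ls_const (0 : k) i = 0.
Proof. by rewrite /ls_const; case: ifP. Qed.

Lemma ls_const_valuation (c : k) : c != 0 -> has_valuation (ls_const c) 0.
Proof. by move=> hc; split=> [|i hi]; rewrite /ls_const ?eqxx // lt_eqF. Qed.

Lemma has_valuation_subl (u w : int -> k) p q : p < q -> has_valuation u p ->
  (forall i, i < q -> w i = 0) -> has_valuation (fun N => u N - w N) p.
Proof.
move=> pq [up ulow] wlow; split=> [|i ip]; first by rewrite wlow ?subr0.
by rewrite ulow ?wlow ?subr0 //; lia.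
Qed.

Lemma has_valuation_subr (u w : int -> k) p q : q < p -> (forall i, i < p -> u i = 0) ->
  has_valuation w q -> has_valuation (fun N => u N - w N) q.
Proof.
move=> qp ulow [wq wlow]; split=> [|i iq]; first by rewrite ulow ?sub0r ?oppr_eq0.
by rewrite ulow ?wlow ?subr0 //; lia.
Qed.

Hypothesis hk : forall x : k, x != 0 -> x \is a GRing.unit.

Lemma mulf_neq0_divring (a b : k) : a != 0 -> b != 0 -> a * b != 0.
Proof.
by move=> ha hb; apply: contraNneq hb => e; rewrite -(mulKr (hk ha) b) e mulr0.
Qed.

Lemma has_valuation_scale (a : k) u p :
  a != 0 -> has_valuation u p -> has_valuation (fun N => a * u N) p.
Proof.
by move=> ha [up ulow]; split=> [|i /ulow ->]; rewrite ?mulr0 ?mulf_neq0_divring.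
Qed.

End Valuation.

Section Span.
Variable k : unitRingType.
Hypothesis hk : forall x : k, x != 0 -> x \is a GRing.unit.

Fixpoint in_span (bs : seq (int -> k)) (u : int -> k) : Prop :=
  if bs is b :: bs' then exists c w, in_span bs' w /\ u = (fun N => c * b N + w N)
  else u = (fun=> 0).

Lemma in_span_sub bs (u w : int -> k) a :
  in_span bs u -> in_span bs w -> in_span bs (fun N => u N - a * w N).
Proof.
elim: bs u w => [|b bs IH] u w /=.
  by move=> -> ->; apply: functional_extensionality => N; rewrite mulr0 subr0.
move=> [c [u' [hu' ->]]] [c' [w' [hw' ->]]].
exists (c - a * c'), (fun N => u' N - a * w' N); split; first exact: IH.
apply: functional_extensionality => N.
by rewrite mulrDr opprD addrACA mulrA mulrBl.
Qed.

Lemma lsum_in_span (op : k -> (int -> k) -> int -> k) bs cs :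
  (forall c b, laurent b -> op c b = (fun N => c * b N)) ->
  (forall b, List.In b bs -> laurent b) -> size cs = size bs ->
  in_span bs (lsum [seq op cb.1 cb.2 | cb <- zip cs bs]).
Proof.
move=> hop; elim: bs cs => [|b bs IH] [|c cs] //= lbs [hsize].
exists c, (lsum [seq op cb.1 cb.2 | cb <- zip cs bs]); split.
  by apply: IH => // b' hb'; apply: lbs; right.
by rewrite /ls_add hop //; apply: lbs; left.
Qed.

Lemma span_valuations bs : exists vs : seq int, (size vs <= size bs)%N /\
  forall u p, in_span bs u -> has_valuation u p -> p \in vs.
Proof.
elim: bs => [|b bs [vs [hsize hvs]]].
  by exists [::]; split=> // u p /= -> [/eqP].
have [[u1 [p1 [hu1 hp1 p1_new]]]|old] :=
  classic (exists u p, [/\ in_span (b :: bs) u, has_valuation u p & p \notin vs]);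
  last first.
  exists vs; split=> [|u p hu hp]; first exact: leqW.
  by apply/negPn/negP => hp'; apply: old; exists u, p.
exists (p1 :: vs); split=> // u p hu hp; rewrite in_cons.
have [//|pp1] := eqVneq p p1.
case: hu1 hu => [c1 [w1 [hw1 u1E]]] [c [w [hw uE]]].
have [c0|cnz] := eqVneq c 0.
  apply/orP; right; apply: hvs hp; suff -> : u = w by [].
  by rewrite uE c0; apply: functional_extensionality => N; rewrite mul0r add0r.
have c1nz : c1 != 0.
  apply: contraNneq p1_new => c10; apply: hvs hp1.
  suff -> : u1 = w1 by [].
  by rewrite u1E c10; apply: functional_extensionality => N; rewrite mul0r add0r.
pose a := c * c1^-1.
have anz : a != 0 by rewrite mulf_neq0_divring // invr_eq0.
have hdiff : in_span bs (fun N => u N - a * u1 N).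
  rewrite (_ : (fun N => _) = (fun N => w N - a * w1 N)); first exact: in_span_sub.
  apply: functional_extensionality => N; rewrite uE u1E mulrDr mulrA mulrVK ?hk //.
  by rewrite opprD addrACA subrr add0r.
apply/orP; right; case: (ltgtP p p1) => [pp1'|p1p|/eqP]; last by rewrite (negbTE pp1).
  by apply: hvs hdiff (has_valuation_subl pp1' hp _) => i /hp1.2 ->; rewrite mulr0.
have := has_valuation_subr p1p hp.2 (has_valuation_scale hk anz hp1).
by move/(hvs _ _ hdiff); rewrite (negbTE p1_new).
Qed.

Lemma span_distinct_valuations bs (ps : seq int) : uniq ps ->
  (forall p, p \in ps -> exists2 u, in_span bs u & has_valuation u p) ->
  (size ps <= size bs)%N.
Proof.
move=> ps_uniq ps_val; have [vs [hsize hvs]] := span_valuations bs.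
apply: leq_trans hsize; apply: uniq_leq_size => // p /ps_val [u hu hp].
exact: hvs hp.
Qed.

End Span.

Section Regularity.
Variable k : unitRingType.
Hypothesis hk : forall x : k, x != 0 -> x \is a GRing.unit.
Variable mul : (int -> k) -> (int -> k) -> int -> k.
Hypothesis mul_valuation : forall f g p q,
  has_valuation f p -> has_valuation g q -> has_valuation (mul f g) (p + q).
Hypothesis mul_laurent : forall f g, laurent (mul f g).

Lemma gen_divring_closed (G : (int -> k) -> Prop) : Defs.divring_closed mul (gen mul G).
Proof.
split=> [u v hu hv|u hu|u v hu hv|u w hu lw uw wu] S hS hconst hG;
  have [SD SN SM SV] := hS.
- by apply: SD; [exact: hu | exact: hv].
- by apply: SN; exact: hu.
- by apply: SM; [exact: hu | exact: hv].
- by apply: (SV u) => //; exact: hu.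
Qed.

Lemma laurent_divring_closed : Defs.divring_closed mul (@laurent k).
Proof.
split=> // [u v [n un] [m vm]|u [n un]].
  by exists (Order.min n m) => i hi; rewrite /ls_add un ?vm ?addr0 //; lia.
by exists n => i hi; rewrite /ls_opp un ?oppr0.
Qed.

Lemma gen_laurent (G : (int -> k) -> Prop) :
  (forall g, G g -> laurent g) -> forall y, gen mul G y -> laurent y.
Proof.
move=> hG y; apply; [exact: laurent_divring_closed | | exact: hG].
by move=> a; exists 0 => i hi; rewrite /ls_const lt_eqF.
Qed.

Lemma iter_mul_valuation y m n : has_valuation y m ->
  has_valuation (iter n (mul^~ y) (ls_const 1)) (n%:Z * m).
Proof.
move=> ym; elim: n => [|n IH] /=.
  by rewrite mul0r; exact/ls_const_valuation/oner_neq0.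
by rewrite intS mulrDl mul1r addrC; exact: mul_valuation.
Qed.

Lemma const_of_finite_left_dim (op : k -> (int -> k) -> int -> k) x :
  (forall c b, laurent b -> op c b = (fun N => c * b N)) -> laurent x ->
  (exists bs : seq (int -> k), (forall b, List.In b bs -> gen mul (fun g => g = x) b) /\
     forall y, gen mul (fun g => g = x) y -> exists cs : seq k, size cs = size bs /\
       y = lsum [seq op c.1 c.2 | c <- zip cs bs]) ->
  exists a, x = ls_const a.
Proof.
move=> hop lx [bs [bs_gen bs_span]].
pose kx := gen mul (fun g => g = x).
have kx_laurent : forall y, kx y -> laurent y by apply: gen_laurent => g ->.
have kx_span y : kx y -> in_span bs y.
  move=> /bs_span [cs [hcs ->]]; apply: lsum_in_span => // b /bs_gen; exact: kx_laurent.
have [kxD kxN kxM _] := gen_divring_closed (fun g => g = x).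
pose y := ls_add x (ls_opp (ls_const (x 0))).
have kx_y : kx y by apply: kxD; [move=> S _ _; apply | apply: kxN => S _ hc _; exact: hc].
case: (classic (exists i, y i != 0)) => [[i yi]|y0]; last first.
  exists (x 0); apply: functional_extensionality => i; apply/eqP; rewrite -subr_eq0.
  by apply/negPn/negP => xi; apply: y0; exists i; rewrite /y /ls_add /ls_opp.
have [m ym] := laurent_has_valuation (kx_laurent _ kx_y) (ex_intro _ i yi).
have m_neq0 : m != 0.
  by apply: contraTneq ym.1 => ->; rewrite /y /ls_add /ls_opp /ls_const eqxx subrr eqxx.
pose ps := [seq j%:Z * m | j <- iota 0 (size bs).+1].
have ps_uniq : uniq ps.
  rewrite map_inj_uniq ?iota_uniq // => j l /(mulIf m_neq0) /eqP.
  by rewrite eqz_nat => /eqP.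
suff: (size ps <= size bs)%N by rewrite /ps size_map size_iota ltnn.
apply: (span_distinct_valuations hk ps_uniq) => _ /mapP [j _ ->].
exists (iter j (mul^~ y) (ls_const 1)); last exact: iter_mul_valuation.
apply: kx_span; elim: j => [|j IH] /=; first by move=> S _ hc _; exact: hc.
exact: kxM.
Qed.

End Regularity.

Section Coefficients.
Variable k : unitRingType.
Variable s : {rmorphism k -> k}.
Variable sinv : k -> k.
Hypothesis hs1 : cancel s sinv.
Hypothesis hs2 : cancel sinv s.
Variable d : k -> k.
Hypothesis hdD : forall a b : k, d (a + b) = d a + d b.

Lemma iter_eq0 (f : k -> k) n a :
  injective f -> f 0 = 0 -> (iter n f a == 0) = (a == 0).
Proof. by move=> fI f0; elim: n => //= n <-; rewrite -{1}f0 (inj_eq fI). Qed.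

Lemma sinv0 : sinv 0 = 0.
Proof. by rewrite -[in LHS](rmorph0 s) hs1. Qed.

Lemma der0 : d 0 = 0.
Proof. by apply: (@addrI _ (d 0)); rewrite -hdD !addr0. Qed.

Lemma sigz_eq0 i a : (sigz s sinv i a == 0) = (a == 0).
Proof.
rewrite /sigz; case: ifP => _; apply: iter_eq0; rewrite ?rmorph0 ?sinv0 //.
  exact: can_inj hs1.
exact: can_inj hs2.
Qed.

Lemma sigz0 i : sigz s sinv i 0 = 0.
Proof. by apply/eqP; rewrite sigz_eq0. Qed.

Lemma czc0 j m : czc s sinv d j m 0 = 0.
Proof.
case: j => n; rewrite /czc.
  elim: n m => [|n IH] m /=; first by rewrite if_same.
  by case: ifP => // _; apply: big1 => l _; rewrite IH iter_fix ?der0 // rmorph0.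
move: n.+1 m; elim=> [|n' IH] m /=; first by rewrite if_same.
by rewrite !IH sinv0 der0 subr0.
Qed.

Lemma cneg_lt n m a : m < - n%:Z -> cneg s sinv d n m a = 0.
Proof.
elim: n m => [|n IH] m h /=; first by rewrite ifF //; apply/negbTE; lia.
by rewrite !IH ?sinv0 ?der0 ?subr0 //; lia.
Qed.

Lemma cneg_diag n a : cneg s sinv d n (- n%:Z) a = iter n sinv a.
Proof.
elim: n => [|n IH] /=; first by rewrite ?oppr0 ?eqxx.
rewrite [X in d (sinv X)]cneg_lt ?sinv0 ?der0 ?subr0; last lia.
by rewrite -IH; congr (sinv (cneg _ _ _ _ _ a)); lia.
Qed.

Lemma czc_lt j m a : m < j -> czc s sinv d j m a = 0.
Proof.
case: j => n h; rewrite /czc; last by apply: cneg_lt; move: h; rewrite NegzE; lia.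
by case: n h => [|n] h /=; rewrite ifF //; apply/negbTE; lia.
Qed.

Lemma sigzN n a : sigz s sinv (- n%:Z) a = iter n sinv a.
Proof. by rewrite /sigz; case: ifP => [|_]; rewrite abszN //; case: n. Qed.

Lemma czc_diag j a : czc s sinv d j j a = sigz s sinv j a.
Proof.
case: j => n; last by rewrite NegzE sigzN -cneg_diag.
rewrite /czc /sigz /=; elim: n => [|n IH] //=.
rewrite ifT; last lia.
rewrite (_ : absz _ = 1%N) ?big_ord1 /=; last lia.
by rewrite -IH; congr (s (cpos _ _ _ _ a)); lia.
Qed.

End Coefficients.

Section TwistedProduct.
Variable k : unitRingType.
Hypothesis hk : forall x : k, x != 0 -> x \is a GRing.unit.
Variable s : {rmorphism k -> k}.
Variable sinv : k -> k.
Hypothesis hs1 : cancel s sinv.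
Hypothesis hs2 : cancel sinv s.

Lemma tmul_laurent f g : laurent (tmul s sinv f g).
Proof.
by exists (lbound f + lbound g) => N hN; rewrite /tmul ifF //; apply/negbTE; lia.
Qed.

Lemma tmul_valuation f g p q : has_valuation f p -> has_valuation g q ->
  has_valuation (tmul s sinv f g) (p + q).
Proof.
move=> vf vg; have lef := lbound_le_valuation vf; have leg := lbound_le_valuation vg.
case: vf vg => [fp flow] [gq glow].
rewrite /tmul; set nf := lbound f in lef *; set ng := lbound g in leg *.
have term N (i : nat) : nf + i%:Z < p \/ N - nf - i%:Z < q ->
    f (nf + i%:Z) * sigz s sinv (nf + i%:Z) (g (N - nf - i%:Z)) = 0.
  by case=> [/flow -> | /glow ->]; rewrite ?mul0r // sigz0 ?mulr0.
split=> [|N hN]; last by case: ifP => // _; apply: big1 => i _; apply: term; lia.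
rewrite ifT; last lia.
rewrite (sum_ord_only (j := absz (p - nf))); [|lia|by move=> i hi; apply: term; lia].
rewrite inordK; last lia.
have -> : nf + (absz (p - nf))%:Z = p by lia.
have -> : p + q - nf - (absz (p - nf))%:Z = q by lia.
by rewrite mulf_neq0_divring ?sigz_eq0.
Qed.

Lemma tmul_const_l c b : laurent b -> tmul s sinv (ls_const c) b = (fun N => c * b N).
Proof.
move=> lb; apply: functional_extensionality => N.
have [->|cnz] := eqVneq c 0.
  by rewrite mul0r /tmul; case: ifP => // _; apply: big1 => i _; rewrite ls_const0 mul0r.
have le0 := lbound_le_valuation (ls_const_valuation cnz).
have bN := @lbound_vanish _ _ lb N.
rewrite /tmul; set n0 := lbound (ls_const c) in le0 *; set nb := lbound b in bN *.
have term (i : nat) : ls_const c (n0 + i%:Z) * sigz s sinv (n0 + i%:Z) (b (N - n0 - i%:Z))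
    = if n0 + i%:Z == 0 then c * b N else 0.
  rewrite /ls_const; case: eqP => [e|_]; last by rewrite mul0r.
  by rewrite e /sigz lexx /= (_ : N - n0 - i%:Z = N) //; lia.
case: ifP => hM; last by rewrite bN ?mulr0 //; lia.
under eq_bigr do rewrite term.
have [/bN ->|nbN] := ltP N nb.
  by rewrite mulr0; apply: big1 => i _; case: ifP; rewrite ?mulr0.
rewrite (sum_ord_only (j := absz (- n0))); [|lia|]; last first.
  by move=> i hi; rewrite ifF //; apply/negbTE; lia.
by rewrite inordK ?ifT //; lia.
Qed.

Lemma tmul_regular : regular_over_k (tmul s sinv) (@laurent k).
Proof.
move=> x lx [hleft _].
apply: (const_of_finite_left_dim hk _ tmul_laurent
  (op := fun c b => tmul s sinv (ls_const c) b)) => //.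
  by move=> f g p q; apply: tmul_valuation.
by move=> c b; apply: tmul_const_l.
Qed.

End TwistedProduct.

Section SkewProduct.
Variable k : unitRingType.
Hypothesis hk : forall x : k, x != 0 -> x \is a GRing.unit.
Variable s : {rmorphism k -> k}.
Variable sinv : k -> k.
Hypothesis hs1 : cancel s sinv.
Hypothesis hs2 : cancel sinv s.
Variable d : k -> k.
Hypothesis hdD : forall a b : k, d (a + b) = d a + d b.

Lemma zmul_laurent f g : laurent (zmul s sinv d f g).
Proof.
by exists (lbound f + lbound g) => N hN; rewrite /zmul ifF //; apply/negbTE; lia.
Qed.

Lemma zmul_valuation f g p q : has_valuation f p -> has_valuation g q ->
  has_valuation (zmul s sinv d f g) (p + q).
Proof.
move=> vf vg; have lef := lbound_le_valuation vf; have leg := lbound_le_valuation vg.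
case: vf vg => [fp flow] [gq glow].
rewrite /zmul; set nf := lbound f in lef *; set ng := lbound g in leg *.
have term N (i j : nat) :
    nf + i%:Z < p \/ ng + j%:Z < q \/ N - nf - i%:Z < ng + j%:Z ->
    czc s sinv d (ng + j%:Z) (N - nf - i%:Z) (f (nf + i%:Z)) * g (ng + j%:Z) = 0.
  by case=> [/flow -> | [/glow -> | /czc_lt ->]]; rewrite ?czc0 ?mul0r ?mulr0.
split=> [|N hN]; last first.
  by case: ifP => // _; apply: big1 => i _; apply: big1 => j _; apply: term; lia.
rewrite ifT; last lia.
rewrite (sum_ord_only (j := absz (p - nf))); [|lia|]; last first.
  by move=> i hi; apply: big1 => j _; apply: term; lia.
rewrite inordK; last lia.
rewrite (sum_ord_only (j := absz (q - ng))); [|lia|by move=> j hj; apply: term; lia].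
rewrite inordK; last lia.
have -> : p + q - nf - (absz (p - nf))%:Z = q by lia.
have -> : nf + (absz (p - nf))%:Z = p by lia.
have -> : ng + (absz (q - ng))%:Z = q by lia.
by rewrite czc_diag // mulf_neq0_divring ?sigz_eq0.
Qed.

Lemma zmul_const_r f c : laurent f -> zmul s sinv d f (ls_const c) = (fun N => f N * c).
Proof.
move=> lf; apply: functional_extensionality => N.
have [->|cnz] := eqVneq c 0.
  rewrite mulr0 /zmul; case: ifP => // _.
  by apply: big1 => i _; apply: big1 => j _; rewrite ls_const0 mulr0.
have le0 := lbound_le_valuation (ls_const_valuation cnz).
have fN := @lbound_vanish _ _ lf N.
rewrite /zmul; set nf := lbound f in fN *; set n0 := lbound (ls_const c) in le0 *.
have term (i j : nat) :
    czc s sinv d (n0 + j%:Z) (N - nf - i%:Z) (f (nf + i%:Z)) * ls_const c (n0 + j%:Z)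
    = if (n0 + j%:Z == 0) && (N - nf - i%:Z == 0) then f N * c else 0.
  rewrite /ls_const; case: eqP => [->|_] /=; last by rewrite mulr0.
  case: eqP => [e|_]; last by rewrite mul0r.
  by rewrite (_ : nf + i%:Z = N) //; lia.
case: ifP => hM; last by rewrite fN ?mul0r //; lia.
under eq_bigr => i _ do under eq_bigr => j _ do rewrite term.
have [/fN ->|nfN] := ltP N nf.
  by rewrite mul0r; apply: big1 => i _; apply: big1 => j _; case: ifP; rewrite ?mul0r.
rewrite (sum_ord_only (j := absz (N - nf))); [|lia|]; last first.
  by move=> i hi; apply: big1 => j _; rewrite ifF //; apply/negbTE; lia.
rewrite inordK; last lia.
rewrite (sum_ord_only (j := absz (- n0))); [|lia|]; last first.
  by move=> j hj; rewrite ifF //; apply/negbTE; lia.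
by rewrite inordK ?ifT //; lia.
Qed.

Lemma zmul_regular : regular_over_k (zmul s sinv d) (@laurent k).
Proof.
move=> x lx [_ hright].
(* Over the opposite ring k^c, right k-spans become left k-spans. *)
have hkc : forall a : k^c, a != 0 -> a \is a GRing.unit := hk.
apply: (@const_of_finite_left_dim k^c hkc (zmul s sinv d) _ zmul_laurent
  (fun c b => zmul s sinv d b (ls_const c))) => //.
  by move=> f g p q; apply: zmul_valuation.
by move=> c b; apply: zmul_const_r.
Qed.

End SkewProduct.

Theorem proposition2 (k : unitRingType)
  (hk : forall x : k, x != 0 -> x \is a GRing.unit)
  (s : {rmorphism k -> k}) (sinv : k -> k)
  (hs1 : cancel s sinv) (hs2 : cancel sinv s)
  (d : k -> k)
  (hdD : forall a b : k, d (a + b) = d a + d b)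
  (hdM : forall a b : k, d (a * b) = s a * d b + d a * b) :
  [/\ regular_over_k (tmul s sinv) (@laurent k),
      regular_over_k (zmul s sinv d) (@laurent k) &
      regular_over_k (zmul s sinv d) (gen (zmul s sinv d) (fun g => g = zinv k))].
Proof.
split; [exact: tmul_regular | exact: zmul_regular |].
move=> x hx; apply: zmul_regular => //.
apply: (gen_laurent (@zmul_laurent _ s sinv d)) hx => _ ->.
by exists (-1) => i hi; rewrite /zinv lt_eqF.
Qed.
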